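(* Let $d\ge 4$ and let $G=\mathrm{GL}_d(2)$ act naturally on the set of $2$-dimensional subspaces of $\mathbb{F}_2^d$. Then $G$ is not $\mathrm{IBIS}$.
   Context: A base of a permutation group $G$ on $\Omega$ is a sequence $(\omega_1,\dots,\omega_\ell)$ of points with trivial pointwise stabilizer; it is irredundant if $G>G_{\omega_1}>\cdots>G_{\omega_1,\dots,\omega_\ell}=1$. $G$ is $\mathrm{IBIS}$ if all irredundant bases of $G$ have the same cardinality. *)

From HB Require Import structures.
From mathcomp Require Import all_boot all_order all_algebra all_fingroup.
Set Implicit Arguments. Unset Strict Implicit. Unset Printing Implicit Defensive.
Import GRing.Theory.
Local Open Scope group_scope.

Section IBIS.
Variables (aT : finGroupType) (D : {set aT}) (T : finType) (to : action D T).

Definition pstab (G : {set aT}) (s : seq T) : {set aT} :=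
  'C_G([set x in s] | to).

Definition irredundant_base (G : {set aT}) (Omega : {set T}) (s : seq T) :=
  [&& all (mem Omega) s,
      [forall i : 'I_(size s), pstab G (take i.+1 s) \proper pstab G (take i s)]
    & pstab G s == 1].

Definition IBIS (G : {set aT}) (Omega : {set T}) : Prop :=
  forall s t : seq T, irredundant_base G Omega s -> irredundant_base G Omega t ->
    size s = size t.
End IBIS.

Section GLact.
Variables (F : finFieldType) (n : nat).
Local Notation d := n.+1.

Definition GL_vec_act (v : 'rV[F]_d) (g : {'GL_d[F]}) : 'rV[F]_d := v *m GLval g.

Fact GL_vec_is_action : is_action [set: {'GL_d[F]}] GL_vec_act.
Proof.
apply: is_total_action => [v | v g h]; rewrite /GL_vec_act.
  by rewrite GL_1E mulmx1.
by rewrite GL_ME mulmxA.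
Qed.
Canonical GL_vec_action := Action GL_vec_is_action.

Definition GL_set_action := (GL_vec_action^*)%act.

Definition rowspace m (A : 'M[F]_(m, d)) : {set 'rV[F]_d} :=
  [set v : 'rV[F]_d | (v <= A)%MS].

Definition subspaces2 : {set {set 'rV[F]_d}} :=
  [set rowspace A | A in [pred A : 'M[F]_(2, d) | \rank A == 2]].
End GLact.

(* Write e_0, ..., e_n for the standard basis of F_2^d, d = n + 1 >= 4, and <e_i, e_j> for
   the coordinate planes.  The chain
     <e_0,e_1>, ..., <e_0,e_n>, <e_1,e_2>, ..., <e_(n-1),e_n>
   of length 2d - 3 is an irredundant base: for each plane some transvection
   v |-> v + v_a e_b fixes all the earlier planes but moves it.  The cycle
     <e_0,e_n>, <e_0,e_1>, <e_1,e_2>, ..., <e_(n-1),e_n>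
   of length d is already a base: an element fixing <e_a,e_b> and <e_b,e_c> fixes their
   intersection <e_b>, and over F_2 this line has e_b as its only nonzero vector, so e_b
   is fixed.  Deleting redundant points from the cycle leaves an irredundant base of size
   at most d < 2d - 3. *)

From mathcomp Require Import all_boot all_order all_algebra all_fingroup.
From mathcomp Require Import zify.
Import GRing.Theory.
Set Implicit Arguments. Unset Strict Implicit. Unset Printing Implicit Defensive.
Local Open Scope group_scope.

Section IrredundantBases.
Variables (aT : finGroupType) (D : {set aT}) (T : finType) (to : action D T).
Variables (G : {set aT}) (Omega : {set T}).
Local Notation pstab := (pstab to G).
Local Notation irredundant_base := (irredundant_base to G Omega).

Lemma mem_pstab s g :
  (g \in pstab s) = [&& g \in G, g \in D & all (fun x => to x g == x) s].
Proof.
rewrite !inE; congr [&& _, _ & _]; apply/subsetP/allP => [fix_s x sx | fix_s x].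
  by have := fix_s x; rewrite !inE; apply.
by rewrite !inE => /fix_s.
Qed.

Lemma pstab_cat s t : pstab (s ++ t) = pstab s :&: pstab t.
Proof.
apply/setP => g; rewrite in_setI !mem_pstab all_cat.
by case: (g \in G); case: (g \in D).
Qed.

Lemma pstabS s t : {subset s <= t} -> pstab t \subset pstab s.
Proof.
move=> sub_st; apply/subsetP => g; rewrite !mem_pstab => /and3P[-> -> /allP fix_t].
by apply/allP => x /sub_st /fix_t.
Qed.

Lemma pstab_take_subset s i : pstab (take i.+1 s) \subset pstab (take i s).
Proof. by apply: pstabS => x; rewrite -(take_takel s (leqnSn i)) => /mem_take. Qed.

Lemma irredundant_subbase s : all (mem Omega) s -> pstab s = 1 ->
  exists2 t, irredundant_base t & size t <= size s.
Proof.
elim: {s}_.+1 {-2}s (ltnSn (size s)) => // m IHm s le_s_m Omega_s base_s.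
have [chain_s | /forallPn[i not_proper]] :=
  boolP [forall i : 'I_(size s), pstab (take i.+1 s) \proper pstab (take i s)].
  by exists s; rewrite // /irredundant_base Omega_s chain_s base_s eqxx.
have lt_is := ltn_ord i.
have eq_i : pstab (take i.+1 s) = pstab (take i s).
  apply/eqP; rewrite eqEsubset pstab_take_subset /=.
  by move: not_proper; rewrite properE pstab_take_subset negbK.
(* the point [nth s i] is redundant, so deleting it does not change the stabilizer *)
pose s' := take i s ++ drop i.+1 s.
have sub_s' : {subset s' <= s} by move=> x; rewrite mem_cat => /orP[/mem_take | /mem_drop].
have size_s' : size s' = (size s).-1 by rewrite size_cat size_drop size_take; case: ifP; lia.
have [|||t irr_t le_t] := IHm s'.
- by rewrite size_s'; lia.
- by apply/allP => x /sub_s'; apply: (allP Omega_s).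
- by rewrite pstab_cat -eq_i -pstab_cat cat_take_drop.
by exists t; rewrite // (leq_trans le_t) // size_s' leq_pred.
Qed.

Lemma irredundant_base_mkseq (f : nat -> T) k :
  (forall i, i < k -> f i \in Omega) -> pstab (mkseq f k) = 1 ->
  (forall i, i < k -> exists2 g, g \in pstab (mkseq f i) & to (f i) g != f i) ->
  irredundant_base (mkseq f k).
Proof.
move=> Omega_f base_f moved_f; apply/and3P; split; last by rewrite base_f.
  by apply/allP => x /mapP[i]; rewrite mem_iota add0n => /Omega_f ? ->.
apply/forallP => -[i /=]; rewrite size_mkseq => lt_ik.
have take_f j : j <= k -> take j (mkseq f k) = mkseq f j.
  by move=> le_jk; rewrite /mkseq -map_take take_iota (minn_idPl le_jk).
rewrite !take_f // ?(ltnW lt_ik) // mkseqS.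
have [g fix_g move_g] := moved_f i lt_ik.
apply/properP; split; first by apply: pstabS => x; rewrite mem_rcons inE orbC => ->.
by exists g => //; rewrite mem_pstab all_rcons (negbTE move_g) !andbF.
Qed.

Lemma not_IBIS_of_short_base s t :
  irredundant_base s -> all (mem Omega) t -> pstab t = 1 -> size t < size s ->
  ~ IBIS to G Omega.
Proof.
move=> irr_s Omega_t base_t lt_ts IBIS_G.
have [u irr_u le_ut] := irredundant_subbase Omega_t base_t.
by move: lt_ts; rewrite -(IBIS_G _ _ irr_u irr_s) ltnNge le_ut.
Qed.
End IrredundantBases.

Section Planes.
Variable n : nat.
Local Notation d := n.+1.
Local Notation F := 'F_2.
Local Notation act := (GL_set_action F n).
Local Open Scope ring_scope.

Lemma F2_cases (c : F) : c = 0 \/ c = 1.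
Proof. by case: c => [[|[|//]] ?]; [left | right]; apply/val_inj. Qed.

Lemma addmx_self_F2 p q (A : 'M[F]_(p, q)) : A + A = 0.
Proof. by rewrite -mulr2n -scaler_nat (_ : 2 = 0 :> F) ?scale0r; last apply/val_inj. Qed.

Definition erow (i : 'I_d) : 'rV[F]_d := delta_mx 0 i.

Definition span2 (a b : 'rV[F]_d) : {set 'rV[F]_d} := [set 0; a; b; a + b].

Lemma mem_span2 a b v : (v \in span2 a b) = [|| v == 0, v == a, v == b | v == a + b].
Proof. by rewrite !inE -!orbA. Qed.

Lemma span2C a b : span2 a b = span2 b a.
Proof.
apply/setP => v; rewrite !mem_span2 [b + a]addrC.
by case: (v == a); case: (v == b); rewrite ?orbT.
Qed.

Lemma rowspace_col_mx (a b : 'rV[F]_d) : rowspace (col_mx a b) = span2 a b.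
Proof.
apply/setP => v; rewrite inE mem_span2 -addsmxE; apply/sub_addsmxP/idP.
  case=> [[u1 u2]] /= ->; rewrite [u1]mx11_scalar [u2]mx11_scalar !mul_scalar_mx.
  by case: (F2_cases (u1 0 0)) => ->; case: (F2_cases (u2 0 0)) => ->;
    rewrite ?scale0r ?scale1r ?add0r ?addr0 eqxx ?orbT.
case/or4P => /eqP ->; [exists (0, 0) | exists (1, 0) | exists (0, 1) | exists (1, 1)];
  by rewrite /= ?mul1mx ?mul0mx ?addr0 ?add0r.
Qed.

Lemma span2_erow_subspaces2 i j : i != j -> span2 (erow i) (erow j) \in subspaces2 F n.
Proof.
move=> neq_ij; have neq_ji : j != i by rewrite eq_sym.
rewrite -rowspace_col_mx; apply: imset_f; rewrite inE /=.
set A := col_mx _ _; have A_orth : A *m A^T = 1%:M.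
  rewrite tr_col_mx mul_col_row /erow !trmx_delta !mul_delta_mx.
  rewrite !mul_delta_mx_0 // [delta_mx _ _]mx11_scalar mxE.
  by rewrite -scalar_mx_block.
rewrite eqn_leq rank_leq_row /=.
by have := mxrankM_maxl A A^T; rewrite A_orth mxrank1.
Qed.

Lemma act_span2 (g : {'GL_d[F]}) a b :
  act (span2 a b) g = span2 (a *m GLval g) (b *m GLval g).
Proof. by rewrite /= /setact !imsetU !imset_set1 /= /GL_vec_act mul0mx mulmxDl. Qed.

Lemma span2_addl a b : span2 (a + b) b = span2 a b.
Proof.
apply/setP => v; rewrite !mem_span2 -addrA addmx_self_F2 addr0.
by case: (v == a); case: (v == a + b); rewrite ?orbT.
Qed.

Lemma span2_erow_coord i j k v :
  v \in span2 (erow i) (erow j) -> k != i -> k != j -> v 0 k = 0.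
Proof.
rewrite mem_span2 => /or4P[] /eqP -> neq_ki neq_kj;
  rewrite !mxE ?eqxx /= 1?[i == k]eq_sym 1?[j == k]eq_sym;
  by rewrite ?(negbTE neq_ki) ?(negbTE neq_kj) ?addr0.
Qed.

Definition transv (i j : 'I_d) : 'M[F]_d := 1%:M + delta_mx i j.

Lemma transv_unit i j : i != j -> transv i j \in unitmx.
Proof.
move=> neq_ij; apply: (proj1 (@mulmx1_unit _ _ _ (transv i j) _)).
rewrite /transv mulmxDl !mulmxDr !mul1mx mulmx1 mul_delta_mx_0 1?eq_sym // addr0.
by rewrite -addrA addmx_self_F2 addr0.
Qed.

(* junk value [1] when [i = j] *)
Definition transvGL (i j : 'I_d) : {'GL_d[F]} := insubd (1%g : {'GL_d[F]}) (transv i j).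

Lemma transvGLE i j : i != j -> GLval (transvGL i j) = transv i j.
Proof. by move=> neq_ij; rewrite /transvGL insubdK //; apply: transv_unit. Qed.

Lemma erow_transv k i j : erow k *m transv i j = erow k + erow j *+ (k == i).
Proof. by rewrite /transv mulmxDr mulmx1 mul_delta_mx_cond. Qed.

Lemma act_span2_transv i j a b : a != b ->
  act (span2 (erow i) (erow j)) (transvGL a b) =
  span2 (erow i + erow b *+ (i == a)) (erow j + erow b *+ (j == a)).
Proof. by move=> neq_ab; rewrite act_span2 transvGLE // !erow_transv. Qed.

Lemma transv_fixes_span2_pivotE i j b : i != j -> i != b ->
  (act (span2 (erow i) (erow j)) (transvGL i b) == span2 (erow i) (erow j)) = (b == j).
Proof.
move=> neq_ij neq_ib.
rewrite act_span2_transv // eqxx [j == i]eq_sym (negbTE neq_ij) addr0.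
have [-> | neq_bj] := eqVneq b j; first by rewrite span2_addl eqxx.
apply/negbTE/eqP => fixed.
have : erow i + erow b \in span2 (erow i) (erow j) by rewrite -fixed mem_span2 eqxx orbT.
move/span2_erow_coord => /(_ b); rewrite eq_sym neq_ib neq_bj => /(_ isT isT) /eqP.
by rewrite !mxE !eqxx [b == i]eq_sym (negbTE neq_ib) add0r oner_eq0.
Qed.

Lemma transv_fixes_span2E i j a b : i != j -> a != b ->
  (act (span2 (erow i) (erow j)) (transvGL a b) == span2 (erow i) (erow j)) =
  ((a == i) || (a == j) ==> (b == i) || (b == j)).
Proof.
move=> neq_ij neq_ab; have [eq_ai | neq_ai] := eqVneq a i.
  by subst a; rewrite transv_fixes_span2_pivotE //= [b == i]eq_sym (negbTE neq_ab).
have [eq_aj | neq_aj] := eqVneq a j.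
  subst a; rewrite span2C (transv_fixes_span2_pivotE neq_ai neq_ab) /=.
  by rewrite [b == j]eq_sym (negbTE neq_ab) orbF.
rewrite act_span2_transv // [i == a]eq_sym [j == a]eq_sym.
by rewrite (negbTE neq_ai) (negbTE neq_aj) !addr0 eqxx.
Qed.

Lemma erow_fixed_of_span2 (g : {'GL_d[F]}) a b c : a != b -> a != c ->
  act (span2 (erow a) (erow b)) g = span2 (erow a) (erow b) ->
  act (span2 (erow b) (erow c)) g = span2 (erow b) (erow c) ->
  erow b *m GLval g = erow b.
Proof.
move=> neq_ab neq_ac fix_ab fix_bc; set x := erow b *m GLval g.
have x_ab : x \in span2 (erow a) (erow b) by rewrite -fix_ab act_span2 mem_span2 eqxx !orbT.
have x_bc : x \in span2 (erow b) (erow c) by rewrite -fix_bc act_span2 mem_span2 eqxx !orbT.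
have /eqP x_a : x 0 a == 0 by rewrite (span2_erow_coord x_bc).
have x_neq0 : x != 0.
  rewrite /x mulmx_free_eq0; last by rewrite row_free_unit; exact: (GL_unitmx g).
  by apply/eqP => /matrixP/(_ 0 b)/eqP; rewrite !mxE !eqxx oner_eq0.
move: x_ab x_a; rewrite mem_span2 (negbTE x_neq0) /= => /or3P[] /eqP -> // /eqP;
  by rewrite !mxE !eqxx /= 1?[b == a]eq_sym ?(negbTE neq_ab) ?addr0 oner_eq0.
Qed.

Lemma GL_eq1_of_fixed_erows (g : {'GL_d[F]}) :
  (forall i, erow i *m GLval g = erow i) -> g = 1%g.
Proof.
move=> fix_g; apply/val_inj/row_matrixP => i.
by rewrite rowE -/(erow i) fix_g rowE mulmx1.
Qed.

Local Close Scope ring_scope.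

(* Nat-indexed versions, so that index arithmetic can be left to [lia]; only indices
   [<= n] are meaningful. *)
Definition plane (i j : nat) := span2 (erow (inord i)) (erow (inord j)).

Definition ptransv (a b : nat) := transvGL (inord a) (inord b).

Lemma inord_eq i j : i <= n -> j <= n -> (inord i == inord j :> 'I_d) = (i == j).
Proof. by move=> le_in le_jn; rewrite -val_eqE /= !inordK. Qed.

Lemma planeC i j : plane i j = plane j i.
Proof. exact: span2C. Qed.

Lemma plane_subspaces2 i j : i <= n -> j <= n -> i != j -> plane i j \in subspaces2 F n.
Proof. by move=> le_in le_jn neq_ij; apply: span2_erow_subspaces2; rewrite inord_eq. Qed.

Lemma ptransv_fixes_planeE a b i j : a <= n -> b <= n -> i <= n -> j <= n ->
  i != j -> a != b ->
  (act (plane i j) (ptransv a b) == plane i j) =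
  ((a == i) || (a == j) ==> (b == i) || (b == j)).
Proof.
by move=> le_an le_bn le_in le_jn neq_ij neq_ab; rewrite transv_fixes_span2E ?inord_eq.
Qed.

Lemma erow_fixed_of_planes (g : {'GL_d[F]}) a b c : a <= n -> b <= n -> c <= n ->
  a != b -> a != c ->
  act (plane a b) g = plane a b -> act (plane b c) g = plane b c ->
  (erow (inord b) *m GLval g)%R = erow (inord b).
Proof.
by move=> le_an le_bn le_cn neq_ab neq_ac; apply: erow_fixed_of_span2; rewrite inord_eq.
Qed.

Lemma GL_eq1_of_fixed_cycle (g : {'GL_d[F]}) : 1 < n ->
  act (plane n 0) g = plane n 0 ->
  (forall k, k < n -> act (plane k k.+1) g = plane k k.+1) -> g = 1%g.
Proof.
move=> lt1n fix_n0 fix_path; apply: GL_eq1_of_fixed_erows => -[b le_bn].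
rewrite -[Ordinal _]inord_val /=.
have fix_pred k : 0 < k <= n -> act (plane k.-1 k) g = plane k.-1 k.
  by move=> range_k; have := fix_path k.-1; rewrite prednK; [apply | ]; lia.
have [-> | neq_b0] := eqVneq b 0.
  by apply: (@erow_fixed_of_planes _ n _ 1) => //; try lia; apply: fix_path; lia.
have [-> | neq_bn] := eqVneq b n.
  by apply: (@erow_fixed_of_planes _ n.-1 _ 0) => //; try lia; apply: fix_pred; lia.
apply: (@erow_fixed_of_planes _ b.-1 _ b.+1); try lia.
  by apply: fix_pred; lia.
by apply: fix_path; lia.
Qed.
End Planes.

Section Bases.
Variable n : nat.
Local Notation d := n.+1.
Local Notation act := (GL_set_action 'F_2 n).
Local Notation GL := [set: {'GL_d['F_2]}].
Local Notation pstab := (pstab act GL).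

Lemma mem_pstab_GL s g : (g \in pstab s) = all (fun x => act x g == x) s.
Proof. by rewrite mem_pstab !inE. Qed.

Definition chain_plane m :=
  if m < n then plane n 0 m.+1 else plane n (m - n).+1 (m - n).+2.

Definition chain_transv m :=
  if m == 0 then ptransv n 1 2
  else if m < n then ptransv n m.+1 1
  else ptransv n (m - n).+2 0.

Definition chain := mkseq chain_plane (n + n.-1).

Definition cycle := plane n n 0 :: mkseq (fun k => plane n k k.+1) n.

Lemma chain_transv_fixesE m j : 2 < n -> m < n + n.-1 -> j <= m ->
  (act (chain_plane j) (chain_transv m) == chain_plane j) = (j != m).
Proof.
move=> lt2n lt_m le_jm; rewrite /chain_plane /chain_transv.
by case: ifP => ?; case: ifP => ?; try case: ifP => ?; rewrite ptransv_fixes_planeE; lia.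
Qed.

Lemma pstab_cycle : 1 < n -> pstab cycle = 1.
Proof.
move=> lt1n; apply/setP => g; rewrite mem_pstab_GL inE.
apply/idP/eqP => [/= /andP[/eqP fix_n0 /allP fix_path] | ->]; last first.
  by apply/allP => x _; rewrite act1.
apply: GL_eq1_of_fixed_cycle => // k lt_kn; apply/eqP/fix_path.
by apply/mapP; exists k; rewrite ?mem_iota.
Qed.

Lemma mem_chain i j : i < j <= n -> (i == 0) || (j == i.+1) -> plane n i j \in chain.
Proof.
move=> lt_ij adjacent; apply/mapP; have [-> | lt0i] := posnP i.
  exists j.-1; first by rewrite mem_iota; lia.
  by rewrite /chain_plane ifT ?prednK //; lia.
have -> : j = i.+1 by lia.
exists (n + i.-1); first by rewrite mem_iota; lia.
by rewrite /chain_plane ifF ?addKn ?prednK //; lia.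
Qed.

Lemma cycle_sub_chain : 0 < n -> {subset cycle <= chain}.
Proof.
move=> lt0n x; rewrite inE => /orP[/eqP -> | /mapP[k]].
  by rewrite planeC mem_chain //; lia.
by rewrite mem_iota => range_k ->; apply: mem_chain; lia.
Qed.

Lemma irredundant_chain : 2 < n -> irredundant_base act GL (subspaces2 'F_2 n) chain.
Proof.
move=> lt2n; apply: irredundant_base_mkseq.
- move=> m lt_m; rewrite /chain_plane; case: ifP => lt_mn; apply: plane_subspaces2; lia.
- have chain_sub : pstab chain \subset pstab cycle.
    by apply: pstabS => x; apply: cycle_sub_chain; lia.
  apply/eqP; rewrite eqEsubset -{1}pstab_cycle 1?chain_sub //=; last lia.
  by rewrite sub1set mem_pstab_GL; apply/allP => x _; rewrite act1.
move=> m lt_m; exists (chain_transv m); last by rewrite chain_transv_fixesE ?eqxx.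
rewrite mem_pstab_GL; apply/allP => x /mapP[j]; rewrite mem_iota => range_j ->.
by rewrite chain_transv_fixesE; lia.
Qed.
End Bases.

Theorem lemma3p3 (n : nat) (hd : 4 <= n.+1) :
  ~ IBIS (GL_set_action 'F_2 n) [set: {'GL_n.+1['F_2]}] (subspaces2 'F_2 n).
Proof.
have lt2n : 2 < n by lia.
have irr_chain := irredundant_chain lt2n.
have /and3P[/allP Omega_chain _ _] := irr_chain.
apply: (not_IBIS_of_short_base irr_chain (t := cycle n)).
- by apply/allP => x /cycle_sub_chain /Omega_chain; apply; lia.
- by apply: pstab_cycle; lia.
by rewrite /= !size_mkseq; lia.
Qed.
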